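(* Let $N\ge 2$ and let $\mathbf{g}\in\mathbb{C}^N$ be a window such that, for $\ell=0$ and $\ell=1$, the DFT of the sequence $n\mapsto\mathbf{g}[n]\overline{\mathbf{g}[(n-\ell)\bmod N]}$ is non-vanishing. Then for every non-vanishing $\mathbf{x}\in\mathbb{C}^N$ (i.e. $\mathbf{x}[n]\neq0$ for all $n$), the algebraic algorithm described in the context, applied to $|\mathbf{X}[m,k]|^2$ (the STFT magnitude of $\mathbf{x}$ with $L=1$), outputs $e^{i\phi}\mathbf{x}$ for some $\phi\in\mathbb{R}$.
   Context: Signals and windows are indexed by $\{0,\dots,N-1\}$ and extended $N$-periodically (indices mod $N$). The STFT of $\mathbf{x}\in\mathbb{C}^N$ with window $\mathbf{g}$ and step $L=1$ is $\mathbf{X}[m,k]=\sum_{n=0}^{N-1}\mathbf{x}[n]\mathbf{g}[m-n]e^{-2\pi i kn/N}$, $m,k=0,\dots,N-1$. The DFT of $\mathbf{v}\in\mathbb{C}^N$ is $(\mathbf{F}\mathbf{v})[k]=\sum_n\mathbf{v}[n]e^{-2\pi i kn/N}$. Algebraic algorithm: given $\mathbf{Y}[m,k]=|\mathbf{X}[m,k]|^2$, (1) compute $\mathbf{Z}[m,\ell]=\sum_{k=0}^{N-1}\mathbf{Y}[m,k]e^{-2\pi i k\ell/N}$ and $\mathbf{z}_\ell=(\mathbf{Z}[m,\ell])_{m=0}^{N-1}$; (2) for $\ell=0,1$ compute $\mathbf{x}_\ell=\frac1N\mathbf{G}_\ell^{-1}\mathbf{z}_\ell$, where $\mathbf{G}_\ell$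 is the $N\times N$ circulant matrix with first column $(\mathbf{g}[m]\overline{\mathbf{g}[(m-\ell)\bmod N]})_{m=0}^{N-1}$ (inverted via its DFT diagonalization), and set $\hat{\mathbf{x}}[0]=\sqrt{\mathbf{x}_0[0]}$; (3) recursively for $n=0,\dots,N-2$ set $\hat{\mathbf{x}}[n+1]$ by $\overline{\hat{\mathbf{x}}[n+1]}=\mathbf{x}_1[n]/\hat{\mathbf{x}}[n]$; output $\hat{\mathbf{x}}$. *)

From mathcomp Require Import all_boot all_order all_algebra.
From mathcomp Require Import complex.
From mathcomp Require Import reals trigo.
Import GRing.Theory Num.Theory.
Set Implicit Arguments. Unset Strict Implicit. Unset Printing Implicit Defensive.
Local Open Scope ring_scope.
Local Open Scope complex_scope.

(* Signals in C^N are represented as functions nat -> R[i]; only the values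
   at 0..N-1 are meaningful, and all indices are reduced mod N. *)

Section STFTPR.
Variable R : realType.

Definition cexp (t : R) : R[i] := cos t +i* sin t.

Definition dftw (N j : nat) : R[i] := cexp (- (2 * pi * j%:R / N%:R)).

Definition dft (N : nat) (v : nat -> R[i]) (k : nat) : R[i] :=
  \sum_(n < N) v n * dftw N (k * n).

Definition idft (N : nat) (v : nat -> R[i]) (n : nat) : R[i] :=
  N%:R^-1 * \sum_(k < N) v k * (dftw N (k * n))^*.

(* (m - n) mod N, for n < N *)
Definition subm (N m n : nat) : nat := (m + N - n) %% N.

(* STFT with step L = 1: X[m,k] = sum_n x[n] g[m-n] e^{-2 pi i k n/N} *)
Definition stft (N : nat) (g x : nat -> R[i]) (m k : nat) : R[i] :=
  \sum_(n < N) x n * g (subm N m n) * dftw N (k * n).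

Definition stft_mag2 (N : nat) (g x : nat -> R[i]) (m k : nat) : R[i] :=
  stft N g x m k * (stft N g x m k)^*.

(* first column of G_l : m |-> g[m] conj(g[(m - l) mod N]) *)
Definition gcol (N : nat) (g : nat -> R[i]) (l m : nat) : R[i] :=
  g m * (g (subm N m l))^*.

Definition alg_Z (N : nat) (Y : nat -> nat -> R[i]) (m l : nat) : R[i] :=
  \sum_(k < N) Y m k * dftw N (k * l).

(* Step (2): x_l = (1/N) G_l^{-1} z_l, where the circulant G_l is inverted
   through its DFT diagonalisation: G_l^{-1} z = F^{-1}( F z / F c_l ). *)
Definition alg_xl (N : nat) (g : nat -> R[i]) (Y : nat -> nat -> R[i])
    (l : nat) (n : nat) : R[i] :=
  N%:R^-1 *
  idft N (fun k => dft N (fun m => alg_Z N Y m l) k / dft N (gcol N g l) k) n.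

Fixpoint alg_rec (x0 : R[i]) (x1 : nat -> R[i]) (n : nat) : R[i] :=
  match n with
  | 0 => sqrtc x0
  | n'.+1 => (x1 n' / alg_rec x0 x1 n')^*
  end.

Definition algebraic_alg (N : nat) (g : nat -> R[i]) (Y : nat -> nat -> R[i])
    (n : nat) : R[i] :=
  alg_rec (alg_xl N g Y 0 0) (alg_xl N g Y 1) n.

End STFTPR.

From mathcomp Require Import all_boot all_order all_algebra.
From mathcomp Require Import complex.
From mathcomp Require Import reals trigo.
From mathcomp Require Import ring lra.
Import Order.TTheory GRing.Theory Num.Theory.
Local Open Scope ring_scope.

(* Expanding |X[m,k]|^2 and summing it against e^{-2 pi i k l / N}, orthogonality
   of the N-th roots of unity collapses the frequency sum: z_l is N times the circular
   convolution of the lag product x_l[n] = x[n] conj(x[n+l]) with the first column c_l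
   of G_l.  By the convolution theorem, dividing DFTs recovers x_l exactly
   as soon as F c_l does not vanish.  Then sqrt(x_0[0]) = |x[0]| = c x[0] with |c| = 1,
   and the recursion conj(xhat[n+1]) = x[n] conj(x[n+1]) / (c x[n]) propagates the
   same unimodular factor c along the whole signal. *)

Section PrimitiveRootSums.
Variables (F : fieldType) (N : nat) (w : F).
Hypothesis prim_w : N.-primitive_root w.

Lemma sum_prim_root_ratio (a b : nat) :
  \sum_(k < N) (w ^+ a / w ^+ b) ^+ k = if a == b %[mod N] then N%:R else 0.
Proof.
have w_neq0 : w != 0 by rewrite (prim_root_eq0 prim_w) -lt0n (prim_order_gt0 prim_w).
case: ifP => [ab | ab].
  rewrite -(eq_prim_root_expr prim_w) in ab.
  rewrite (eqP ab) divff ?expf_neq0 //.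
  by under eq_bigr do rewrite expr1n; rewrite sumr_const card_ord.
set u := w ^+ a / w ^+ b.
have u_neq1 : u != 1.
  rewrite /u (can2_eq (divfK _) (mulfK _)) ?expf_neq0 // mul1r.
  by rewrite (eq_prim_root_expr prim_w) ab.
have uN : u ^+ N = 1.
  rewrite /u expr_div_n -!exprM !(mulnC _ N) !exprM (prim_expr_order prim_w).
  by rewrite !expr1n divr1.
have : (u - 1) * \sum_(k < N) u ^+ k == 0 by rewrite -subrX1 uN subrr.
by rewrite mulf_eq0 subr_eq0 (negbTE u_neq1) => /eqP.
Qed.

End PrimitiveRootSums.

Section ComplexExponential.
Context {R : realType}.
Implicit Types s t : R.

Lemma cexpD s t : cexp (s + t) = cexp s * cexp t.
Proof. by rewrite /cexp sinD cosD; simpc; congr (_ +i* _)%C; ring. Qed.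

Lemma cexp0 : cexp (0 : R) = 1.
Proof. by rewrite /cexp cos0 sin0. Qed.

Lemma cexpMn t j : cexp (t * j%:R) = cexp t ^+ j.
Proof.
elim: j => [|j IHj]; first by rewrite mulr0 cexp0.
by rewrite -natr1 mulrDr mulr1 cexpD IHj exprSr.
Qed.

Lemma cexpN t : cexp (- t) = (cexp t)^-1.
Proof.
have inv : cexp t * cexp (- t) = 1 by rewrite -cexpD subrr cexp0.
have t_neq0 : cexp t != 0.
  by apply: contra_eq_neq inv => ->; rewrite mul0r eq_sym oner_neq0.
by apply: (mulfI t_neq0); rewrite inv divff.
Qed.

Lemma conjc_cexp t : (cexp t)^* = (cexp t)^-1.
Proof. by rewrite -cexpN /cexp cosN sinN. Qed.

Lemma cos_lt1 t : 0 < t < pi *+ 2 -> cos t < 1.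
Proof.
move=> /andP[t_gt0 t_lt2pi].
have -> : t = (t / 2) *+ 2 by rewrite -mulr_natr divfK ?pnatr_eq0.
have : 0 < sin (t / 2) by apply: sin_gt0_pi; rewrite mulr2n in t_lt2pi; lra.
by rewrite cos_mulr2n cos2sin2; nra.
Qed.

Lemma cexp_eq1 t : 0 < t < pi *+ 2 -> cexp t != 1.
Proof.
by move=> /cos_lt1; rewrite lt_neqAle => /andP[c _]; apply: contra c => /eqP[-> _].
Qed.

Lemma cexp_unit (u : R[i]) : `|u| = 1 -> exists phi : R, cexp phi = u.
Proof.
case: u => a b /(congr1 (fun z => z ^+ 2)); rewrite sqr_normc expr1n; simpc => -[h _].
have a_bnd : -1 <= a <= 1 by apply/andP; split; nra.
have cos_a : cos (acos a) = a by rewrite acosK // in_itv /=.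
have sin_a : sin (acos a) = `|b| by rewrite sin_acos // -h addrAC subrr add0r sqrtr_sqr.
have [b_ge0 | b_lt0] := lerP 0 b.
  by exists (acos a); rewrite /cexp cos_a sin_a ger0_norm.
by exists (- acos a); rewrite /cexp cosN sinN cos_a sin_a ltr0_norm // opprK.
Qed.

End ComplexExponential.

Section Twiddle.
Variables (R : realType) (N : nat).
Hypothesis N_gt0 : (0 < N)%N.

Lemma dftwE j : dftw R N j = dftw R N 1 ^+ j.
Proof. by rewrite /dftw -cexpMn mulr1 mulNr mulrAC. Qed.

Lemma conjc_dftw j : (dftw R N j)^* = (dftw R N j)^-1.
Proof. exact: conjc_cexp. Qed.

Lemma dftw_prim_root : N.-primitive_root (dftw R N 1).
Proof.
have N_neq0 : N%:R != 0 :> R by rewrite pnatr_eq0 -lt0n.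
have wN : dftw R N 1 ^+ N = 1.
  by rewrite -dftwE /dftw mulfK // mulr_natl cexpN /cexp cos2pi sin2pi invr1.
have [m prim_m /(dvdn_leq N_gt0) m_le_N] := prim_order_exists N_gt0 wN.
suff m_eq_N : m = N by rewrite m_eq_N in prim_m.
apply/eqP; rewrite eqn_leq m_le_N leqNgt; apply/negP => m_lt_N.
have m_gt0 : (0 < m)%N := prim_order_gt0 prim_m.
have := prim_expr_order prim_m; rewrite -dftwE /dftw cexpN => /eqP; rewrite invr_eq1.
apply/negP/cexp_eq1.
have m_lt_N' : m%:R < N%:R :> R by rewrite ltr_nat.
have N_pos : 0 < N%:R :> R by rewrite ltr0n.
have pi_pos := @pi_gt0 R.
rewrite divr_gt0 ?mulr_gt0 ?ltr0n //= ltr_pdivrMr // mulr2n; nra.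
Qed.

Lemma sum_dftw_conj a b :
  \sum_(k < N) dftw R N (k * a) * (dftw R N (k * b))^* =
  if a == b %[mod N] then N%:R else 0.
Proof.
rewrite -(@sum_prim_root_ratio _ _ _ dftw_prim_root); apply: eq_bigr => k _.
rewrite [X in _ * X]conjc_dftw (dftwE (k * a)) (dftwE (k * b)).
by rewrite !exprM !(exprAC _ k) -expr_div_n.
Qed.

End Twiddle.

Section CircularIndex.
Variable N : nat.
Hypothesis N_gt0 : (0 < N)%N.

Lemma subm_ltn m n : (subm N m n < N)%N.
Proof. by rewrite ltn_pmod. Qed.

Lemma submK m n : (n <= N)%N -> (subm N m n + n = m %[mod N])%N.
Proof.
move=> n_le_N; rewrite modnDml subnK ?modnDr //.
exact: leq_trans n_le_N (leq_addl m N).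
Qed.

Lemma subm_eq m n r : (r < N)%N -> (n <= N)%N ->
  (r + n = m %[mod N])%N -> subm N m n = r.
Proof.
move=> r_lt_N n_le_N rn_m; apply/eqP.
rewrite -(modn_small r_lt_N) -(modn_small (subm_ltn m n)) -(eqn_modDr n).
by rewrite submK // rn_m.
Qed.

Lemma subm_addmod m n l : (n < N)%N -> (l <= N)%N ->
  subm N m ((n + l) %% N) = subm N (subm N m n) l.
Proof.
move=> n_lt_N l_le_N; apply/esym/subm_eq; rewrite ?subm_ltn //.
apply/eqP; rewrite -(eqn_modDr n) -addnA [(l + n)%N]addnC -modnDmr submK ?submK //.
  exact: ltnW.
by rewrite ltnW ?ltn_pmod.
Qed.

Lemma sum_eqmod_pick (S : pzSemiRingType) (F : nat -> S) (a : S) i :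
  \sum_(j < N) F j * (if i == j %[mod N] then a else 0) = F (i %% N)%N * a.
Proof.
rewrite (bigD1 (Ordinal (ltn_pmod i N_gt0))) //= modn_mod eqxx big1 ?addr0 //.
move=> j j_neq; rewrite (modn_small (ltn_ord j)).
case: eqP => [i_eq | _]; last by rewrite mulr0.
by rewrite -val_eqE /= i_eq eqxx in j_neq.
Qed.

End CircularIndex.

Definition cconv {S : pzSemiRingType} (N : nat) (y c : nat -> S) (m : nat) : S :=
  \sum_(n < N) y n * c (subm N m n).

Section DFT.
Variables (R : realType) (N : nat).
Hypothesis N_gt0 : (0 < N)%N.
Implicit Types u v y c : nat -> R[i].

Lemma eq_dft u v k : (forall m, (m < N)%N -> u m = v m) -> dft N u k = dft N v k.
Proof. by move=> uv; apply: eq_bigr => m _; rewrite uv. Qed.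

Lemma eq_idft u v n : (forall m, (m < N)%N -> u m = v m) -> idft N u n = idft N v n.
Proof. by move=> uv; congr (_ * _); apply: eq_bigr => m _; rewrite uv. Qed.

Lemma dftwD a b : dftw R N (a + b) = dftw R N a * dftw R N b.
Proof. by rewrite dftwE exprD -!dftwE. Qed.

Lemma dftw_eqmod a b : (a = b %[mod N])%N -> dftw R N a = dftw R N b.
Proof.
move=> ab; rewrite (dftwE R N a) (dftwE R N b); apply/eqP.
by rewrite (eq_prim_root_expr (dftw_prim_root R N N_gt0)) ab.
Qed.

Lemma dft_translate c n k : (n < N)%N ->
  dft N (fun m => c (subm N m n)) k = dftw R N (k * n) * dft N c k.
Proof.
move=> n_lt_N; pose shift (j : 'I_N) := Ordinal (ltn_pmod (j + n) N_gt0).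
have shift_inj : injective shift.
  move=> i j /(congr1 val) /= /eqP; rewrite eqn_modDr !modn_small // => /eqP.
  exact: val_inj.
rewrite /dft (reindex_inj shift_inj) mulr_sumr; apply: eq_bigr => j _ /=.
rewrite (@subm_eq N N_gt0 _ n j) ?(ltnW n_lt_N) ?modn_mod //.
rewrite (@dftw_eqmod _ (k * n + k * j)); first by rewrite dftwD mulrCA.
by rewrite modnMmr mulnDr addnC.
Qed.

Lemma dft_cconv y c k : dft N (cconv N y c) k = dft N y k * dft N c k.
Proof.
rewrite /dft /cconv; under eq_bigr do rewrite mulr_suml.
rewrite exchange_big mulr_suml; apply: eq_bigr => n _ /=.
under eq_bigr do rewrite -mulrA.
rewrite -mulr_sumr; have := @dft_translate c n k (ltn_ord n); rewrite /dft => ->.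
by rewrite mulrA.
Qed.

Lemma idft_dft y n : (n < N)%N -> idft N (dft N y) n = y n.
Proof.
move=> n_lt_N; rewrite /idft /dft.
under eq_bigr do rewrite mulr_suml.
rewrite exchange_big /=.
under eq_bigr do under eq_bigr do rewrite -mulrA.
under eq_bigr do rewrite -mulr_sumr sum_dftw_conj // eq_sym.
by rewrite sum_eqmod_pick // modn_small // mulrC mulfK // pnatr_eq0 -lt0n.
Qed.

End DFT.

Section Recovery.
Variables (R : realType) (N : nat) (g x : nat -> R[i]).
Hypothesis N_gt0 : (0 < N)%N.

Definition lag_product (l n : nat) : R[i] := x n * (x ((n + l) %% N))^*.

Lemma alg_Z_cconv l m : (l <= N)%N ->
  alg_Z N (stft_mag2 N g x) m l =
  cconv N (fun n => N%:R * lag_product l n) (gcol N g l) m.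
Proof.
move=> l_le_N; rewrite /alg_Z /stft_mag2 /stft.
set a := fun n => x n * g (subm N m n).
transitivity (\sum_(k < N) \sum_(n < N) \sum_(n' < N) a n * (a n')^* *
    (dftw R N (k * (n + l)) * (dftw R N (k * n'))^*)).
  apply: eq_bigr => k _; rewrite rmorph_sum !mulr_suml; apply: eq_bigr => n _.
  rewrite mulr_sumr mulr_suml; apply: eq_bigr => n' _.
  by rewrite !rmorphM mulnDr dftwD /a; ring.
rewrite exchange_big /cconv; apply: eq_bigr => n _ /=; rewrite exchange_big /=.
under eq_bigr do rewrite -mulr_sumr sum_dftw_conj //.
rewrite (@sum_eqmod_pick N N_gt0 _ (fun j => a n * (a j)^*)).
by rewrite /gcol /lag_product /a subm_addmod // rmorphM; ring.
Qed.

Lemma alg_xl_lag_product l n : (l <= N)%N -> (n < N)%N ->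
  (forall k, (k < N)%N -> dft N (gcol N g l) k != 0) ->
  alg_xl N g (stft_mag2 N g x) l n = lag_product l n.
Proof.
move=> l_le_N n_lt_N gcol_neq0; rewrite /alg_xl.
rewrite (@eq_idft R N _ (dft N (fun n => N%:R * lag_product l n))) => [|k k_lt_N].
  by rewrite idft_dft // mulKf // pnatr_eq0 -lt0n.
rewrite (@eq_dft R N _ (cconv N (fun n => N%:R * lag_product l n) (gcol N g l))).
  by rewrite dft_cconv // mulfK // gcol_neq0.
by move=> m _; rewrite alg_Z_cconv.
Qed.

End Recovery.

(* [alg_rec] conjugates with [conjc], the other definitions with [Num.conj];
   on [R[i]] the two coincide definitionally. *)
Lemma conjcE (R : rcfType) (z : R[i]) : conjc z = z^*.
Proof. by []. Qed.

Lemma alg_rec_phase (R : realType) (N : nat) (x0 c : R[i]) (x1 x : nat -> R[i]) :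
  `|c| = 1 -> sqrtc x0 = c * x 0%N ->
  (forall n, (n.+1 < N)%N -> x1 n = x n * (x n.+1)^*) ->
  (forall n, (n < N)%N -> x n != 0) ->
  forall n, (n < N)%N -> alg_rec x0 x1 n = c * x n.
Proof.
move=> c_norm x0_eq x1_eq x_neq0; elim=> [// | n IHn] n_lt_N.
have c_neq0 : c != 0 by rewrite -normr_eq0 c_norm oner_neq0.
have conj_c : c^* = c^-1 by rewrite invC_norm c_norm expr1n invr1 mul1r.
have xn_neq0 : x n != 0 by rewrite x_neq0 // ltnW.
rewrite /=; have -> : x1 n / alg_rec x0 x1 n = (x n.+1)^* * c^*.
  by rewrite x1_eq // IHn 1?ltnW // conj_c; field; rewrite c_neq0 xn_neq0.
by rewrite conjcE rmorphM /= !conjCK mulrC.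
Qed.

Theorem theorem2 (R : realType) (N : nat) (g : nat -> R[i]) :
  (2 <= N)%N ->
  (forall (l : nat), (l <= 1)%N ->
     forall k : nat, (k < N)%N -> dft N (gcol N g l) k != 0) ->
  forall x : nat -> R[i],
    (forall n : nat, (n < N)%N -> x n != 0) ->
    exists phi : R, forall n : nat, (n < N)%N ->
      algebraic_alg N g (stft_mag2 N g x) n = cexp phi * x n.
Proof.
move=> N_ge2 gcol_neq0 x x_neq0.
have N_gt0 : (0 < N)%N by apply: leq_trans N_ge2.
have x0_neq0 := x_neq0 0%N N_gt0.
set c := `|x 0%N| / x 0%N.
have c_norm : `|c| = 1 by rewrite normf_div normr_id divff // normr_eq0.
have [phi phi_c] := cexp_unit _ c_norm.
exists phi; rewrite phi_c; apply: alg_rec_phase => //.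
- rewrite alg_xl_lag_product //; last exact: gcol_neq0.
  by rewrite /lag_product add0n mod0n /c divfK // normcE.
- move=> n n1_lt_N.
  rewrite alg_xl_lag_product ?(ltnW n1_lt_N) //; last exact: gcol_neq0.
  by rewrite /lag_product addn1 modn_small.
Qed.
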